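(* There is a universal constant $C>0$ such that the following holds. Let $S$ be a finite set, $T\ge1$ an integer, $(x_i)_{0\le i\le T}$ a sequence of (not necessarily distinct) elements of $S$, $r\ge2$, and $f:S\to(0,\infty)$ such that $\max\big(\frac{f(x_i)}{f(x_{i-1})},\frac{f(x_{i-1})}{f(x_i)}\big)\le r$ for $1\le i\le T$. Then $$\big(f(x_T)-f(x_0)\big)\log\frac{f(x_T)}{f(x_0)}\le C\big(1+(T-1)^2\log r\big)\sum_{t=1}^T\big(f(x_t)-f(x_{t-1})\big)\log\frac{f(x_t)}{f(x_{t-1})}.$$ *)

From Stdlib Require Export Reals FinFun.
Open Scope R_scope.

Definition sum_1_to (T : nat) (g : nat -> R) : R :=
  match T with
  | O => 0
  | S n => sum_f_R0 (fun k => g (S k)) n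
  end.

From Stdlib Require Import Reals FinFun Lra Lia Psatz.
Open Scope R_scope.

(* Write E(a,b) = (b - a)(ln b - ln a) for the "energy" of a step
   between positive reals.  The whole argument rests on the two-sided comparison
       (sqrt b - sqrt a)^2 <= E(a,b) <= (sqrt b - sqrt a)^2 (4 + 2 |ln b - ln a|),
   a polynomial inequality in p = sqrt a, q = sqrt b once ln b - ln a is pinned
   between (b - a)/b and (b - a)/a.  For a path a_0, ..., a_T with |ln a_t -
   ln a_(t-1)| <= L, telescoping gives sqrt a_T - sqrt a_0 = sum of the square-root
   increments and |ln a_T - ln a_0| <= T L, so by Cauchy-Schwarz
       E(a_0,a_T) <= T (4 + 2 T L) sum_t (sqrt a_t - sqrt a_(t-1))^2
                  <= T (4 + 2 T L) sum_t E(a_(t-1),a_t).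
   With L = ln r >= ln 2 > 1/2 the factor T (4 + 2 T L) is at most
   16 (1 + (T - 1)^2 ln r) when T >= 2, and the case T = 1 is an identity;
   hence C = 16 works. *)

Lemma ln_div_pos (x y : R) : 0 < x -> 0 < y -> ln (x / y) = ln x - ln y.
Proof.
  intros Hx Hy; unfold Rdiv.
  rewrite ln_mult, ln_Rinv; [ring | lra | lra | apply Rinv_0_lt_compat; lra].
Qed.

Lemma ln_le_compat (x y : R) : 0 < x -> x <= y -> ln x <= ln y.
Proof.
  intros Hx [Hlt | ->]; [left; apply ln_increasing; lra | lra].
Qed.

Lemma ln_le_sub_one (y : R) : 0 < y -> ln y <= y - 1.
Proof.
  intros Hy; pose proof (exp_ineq1_le (ln y)) as H; rewrite exp_ln in H; lra.
Qed.

(* For 0 < a <= b the log gap D = ln b - ln a satisfies D a <= b - a <= D b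
   (the two tangent-line bounds applied to b/a and a/b). *)
Lemma log_gap_sandwich (a b : R) : 0 < a -> a <= b ->
  (ln b - ln a) * a <= b - a <= (ln b - ln a) * b.
Proof.
  intros Ha Hab.
  assert (Hba : ln (b / a) <= b / a - 1) by (apply ln_le_sub_one, Rdiv_lt_0_compat; lra).
  assert (Hab' : ln (a / b) <= a / b - 1) by (apply ln_le_sub_one, Rdiv_lt_0_compat; lra).
  rewrite ln_div_pos in Hba, Hab' by lra.
  split.
  - apply Rmult_le_compat_r with (r := a) in Hba; [| lra].
    replace ((b / a - 1) * a) with (b - a) in Hba by (field; lra); exact Hba.
  - apply Rmult_le_compat_r with (r := b) in Hab'; [| lra].
    replace ((a / b - 1) * b) with (a - b) in Hab' by (field; lra); lra.
Qed.

(* The upper bound comes from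
   splitting q + p = (3p - q) + 2(q - p) and (3p - q) D <= 4 (q - p). *)
Lemma sqrt_gap_poly (p q D : R) :
  0 < p -> p <= q -> 0 <= D -> D * p ^ 2 <= q ^ 2 - p ^ 2 <= D * q ^ 2 ->
  (q - p) ^ 2 <= (q ^ 2 - p ^ 2) * D <= (q - p) ^ 2 * (4 + 2 * D).
Proof.
  intros Hp Hpq HD [Hlo Hhi].
  split.
  - assert (Hq : 0 < q ^ 2) by nra.
    apply Rmult_le_reg_r with (q ^ 2); [exact Hq |].
    assert (Hfac : (q - p) ^ 2 * q ^ 2 <= (q ^ 2 - p ^ 2) ^ 2).
    { replace ((q ^ 2 - p ^ 2) ^ 2) with ((q - p) ^ 2 * (q + p) ^ 2) by ring.
      apply Rmult_le_compat_l; [apply pow2_ge_0 | nra]. }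
    assert (Hgap : (q ^ 2 - p ^ 2) ^ 2 <= (q ^ 2 - p ^ 2) * (D * q ^ 2)).
    { replace ((q ^ 2 - p ^ 2) ^ 2) with ((q ^ 2 - p ^ 2) * (q ^ 2 - p ^ 2)) by ring.
      apply Rmult_le_compat_l; nra. }
    nra.
  - assert (Hkey : (3 * p - q) * D <= 4 * (q - p)).
    { destruct (Rle_lt_dec q (3 * p)) as [Hle | Hlt]; [| nra].
      apply Rmult_le_reg_r with (p ^ 2); [nra |].
      assert ((3 * p - q) * (q + p) <= 4 * p ^ 2) by nra.
      nra. }
    replace ((q ^ 2 - p ^ 2) * D)
      with ((q - p) * ((3 * p - q) * D + 2 * (q - p) * D)) by ring.
    replace ((q - p) ^ 2 * (4 + 2 * D))
      with ((q - p) * (4 * (q - p) + 2 * (q - p) * D)) by ring.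
    apply Rmult_le_compat_l; lra.
Qed.

Definition energy (a b : R) : R := (b - a) * (ln b - ln a).

(* Energy is symmetric, which reduces the comparison to increasing steps. *)
Lemma energy_sym (a b : R) : energy a b = energy b a.
Proof. unfold energy; ring. Qed.

Lemma energy_sqrt_bounds_ordered (a b : R) : 0 < a -> a <= b ->
  (sqrt b - sqrt a) ^ 2 <= energy a b
    <= (sqrt b - sqrt a) ^ 2 * (4 + 2 * Rabs (ln b - ln a)).
Proof.
  intros Ha Hab.
  assert (HD : 0 <= ln b - ln a) by (pose proof (ln_le_compat a b Ha Hab); lra).
  rewrite Rabs_right by lra.
  assert (Hpa : sqrt a ^ 2 = a) by (rewrite <- Rsqr_pow2; apply Rsqr_sqrt; lra).
  assert (Hpb : sqrt b ^ 2 = b) by (rewrite <- Rsqr_pow2; apply Rsqr_sqrt; lra).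
  pose proof (sqrt_gap_poly (sqrt a) (sqrt b) (ln b - ln a)) as Hpoly.
  rewrite Hpa, Hpb in Hpoly; apply Hpoly;
    [apply sqrt_lt_R0; lra | apply sqrt_le_1_alt; lra | lra | apply log_gap_sandwich; lra].
Qed.

Lemma energy_sqrt_bounds (a b : R) : 0 < a -> 0 < b ->
  (sqrt b - sqrt a) ^ 2 <= energy a b
    <= (sqrt b - sqrt a) ^ 2 * (4 + 2 * Rabs (ln b - ln a)).
Proof.
  intros Ha Hb; destruct (Rle_lt_dec a b) as [Hab | Hba].
  - apply energy_sqrt_bounds_ordered; lra.
  - rewrite energy_sym.
    replace ((sqrt b - sqrt a) ^ 2) with ((sqrt a - sqrt b) ^ 2) by ring.
    replace (ln b - ln a) with (- (ln a - ln b)) by ring; rewrite Rabs_Ropp.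
    apply energy_sqrt_bounds_ordered; lra.
Qed.

Lemma energy_nonneg (a b : R) : 0 < a -> 0 < b -> 0 <= energy a b.
Proof.
  intros Ha Hb; pose proof (energy_sqrt_bounds a b Ha Hb) as [H _].
  pose proof (pow2_ge_0 (sqrt b - sqrt a)); lra.
Qed.

Lemma sum_telescope (s : nat -> R) (n : nat) :
  sum_f_R0 (fun k => s (S k) - s k) n = s (S n) - s O.
Proof. induction n as [| n IH]; simpl; [| rewrite IH]; ring. Qed.

Lemma sum_sq_cauchy_schwarz (u : nat -> R) (n : nat) :
  (sum_f_R0 u n) ^ 2 <= INR (S n) * sum_f_R0 (fun k => u k ^ 2) n.
Proof.
  induction n as [| n IH]; [simpl; lra |].
  rewrite !tech5, S_INR.
  set (s := sum_f_R0 u n) in *; set (Q := sum_f_R0 (fun k => u k ^ 2) n) in *.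
  set (N := INR (S n)) in *; set (v := u (S n)).
  assert (HN : 0 < N) by (apply lt_0_INR; lia).
  (* the cross term: 2 s v <= Q + N v^2, since N Q >= s^2 *)
  assert (Hcross : 2 * s * v <= Q + N * v ^ 2).
  { apply Rmult_le_reg_l with N; [lra |].
    pose proof (pow2_ge_0 (s - N * v)); nra. }
  replace ((s + v) ^ 2) with (s ^ 2 + 2 * s * v + v ^ 2) by ring.
  replace ((N + 1) * (Q + v ^ 2)) with (N * Q + (Q + N * v ^ 2) + v ^ 2) by ring.
  lra.
Qed.

Lemma sum_abs_le (e : nat -> R) (L : R) (n : nat) :
  (forall k, (k <= n)%nat -> Rabs (e k) <= L) ->
  Rabs (sum_f_R0 e n) <= INR (S n) * L.
Proof.
  intros He.
  apply Rle_trans with (sum_f_R0 (fun k => Rabs (e k)) n); [apply Rsum_abs |].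
  rewrite Rmult_comm, <- sum_cte; apply sum_Rle; exact He.
Qed.

Lemma log_step_le (a b r : R) : 0 < a -> 0 < b ->
  Rmax (b / a) (a / b) <= r -> Rabs (ln b - ln a) <= ln r.
Proof.
  intros Ha Hb Hr.
  pose proof (Rmax_l (b / a) (a / b)); pose proof (Rmax_r (b / a) (a / b)).
  assert (Hup : ln (b / a) <= ln r) by (apply ln_le_compat; [apply Rdiv_lt_0_compat |]; lra).
  assert (Hdn : ln (a / b) <= ln r) by (apply ln_le_compat; [apply Rdiv_lt_0_compat |]; lra).
  rewrite ln_div_pos in Hup, Hdn by lra.
  apply Rabs_le; lra.
Qed.

Lemma path_energy_bound (a : nat -> R) (L : R) (n : nat) :
  (forall k, 0 < a k) ->
  (forall k, (k <= n)%nat -> Rabs (ln (a (S k)) - ln (a k)) <= L) ->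
  energy (a O) (a (S n))
    <= INR (S n) * (4 + 2 * (INR (S n) * L))
       * sum_f_R0 (fun k => energy (a k) (a (S k))) n.
Proof.
  intros Ha Hstep.
  set (u := fun k => sqrt (a (S k)) - sqrt (a k)).
  set (Q := sum_f_R0 (fun k => u k ^ 2) n).
  set (G := sum_f_R0 (fun k => energy (a k) (a (S k))) n).
  assert (HQG : Q <= G).
  { apply sum_Rle; intros k _; apply energy_sqrt_bounds; apply Ha. }
  assert (HQ : 0 <= Q) by (apply cond_pos_sum; intro; apply pow2_ge_0).
  assert (Hsqrt : (sqrt (a (S n)) - sqrt (a O)) ^ 2 <= INR (S n) * Q).
  { rewrite <- (sum_telescope (fun k => sqrt (a k))).
    apply sum_sq_cauchy_schwarz. }
  assert (Hlog : Rabs (ln (a (S n)) - ln (a O)) <= INR (S n) * L).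
  { rewrite <- (sum_telescope (fun k => ln (a k))); apply sum_abs_le; exact Hstep. }
  assert (HN : 0 <= INR (S n)) by apply pos_INR.
  pose proof (energy_sqrt_bounds (a O) (a (S n)) (Ha O) (Ha (S n))) as [_ Hend].
  pose proof (Rabs_pos (ln (a (S n)) - ln (a O))).
  pose proof (pow2_ge_0 (sqrt (a (S n)) - sqrt (a O))).
  apply Rle_trans with (1 := Hend).
  replace (INR (S n) * (4 + 2 * (INR (S n) * L)) * G)
    with ((INR (S n) * G) * (4 + 2 * (INR (S n) * L))) by ring.
  apply Rmult_le_compat; nra.
Qed.

Lemma path_constant_le (N L : R) : 1 <= N -> / 2 <= L ->
  (N + 1) * (4 + 2 * ((N + 1) * L)) <= 16 * (1 + N ^ 2 * L).
Proof.
  intros HN HL.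
  assert (HNsq : N <= N ^ 2) by nra.
  assert (HNL : N ^ 2 <= 2 * N ^ 2 * L) by nra.
  assert (HT : (N + 1) ^ 2 * L <= 4 * N ^ 2 * L)
    by (apply Rmult_le_compat_r; nra).
  nra.
Qed.

Theorem mainTheorem12 :
  exists C : R, C > 0 /\
    forall (S : Type) (HS : Finite S) (T : nat) (x : nat -> S) (r : R) (f : S -> R),
      (1 <= T)%nat ->
      r >= 2 ->
      (forall s : S, f s > 0) ->
      (forall i : nat, (1 <= i <= T)%nat ->
         Rmax (f (x i) / f (x (i - 1)%nat)) (f (x (i - 1)%nat) / f (x i)) <= r) ->
      (f (x T) - f (x O)) * ln (f (x T) / f (x O))
        <= C * (1 + (INR T - 1) ^ 2 * ln r) *
           sum_1_to T (fun t => (f (x t) - f (x (t - 1)%nat)) * ln (f (x t) / f (x (t - 1)%nat))).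
Proof.
  exists 16; split; [lra |].
  intros State HS T x r f HT Hr Hf Hratio.
  set (a := fun k => f (x k)).
  assert (Ha : forall k, 0 < a k) by (intro k; apply Rgt_lt, Hf).
  assert (HL : / 2 <= ln r)
    by (pose proof ln_lt_2; pose proof (ln_le_compat 2 r ltac:(lra) ltac:(lra)); lra).
  destruct T as [| n]; [lia |].
  (* both sides are energies along the path a *)
  unfold sum_1_to; rewrite ln_div_pos by apply Ha.
  rewrite (sum_eq _ (fun k => energy (a k) (a (S k)))).
  2: { intros k _; replace (S k - 1)%nat with k by lia.
       unfold energy, a; rewrite ln_div_pos by apply Ha; reflexivity. }
  change (energy (a O) (a (S n))
          <= 16 * (1 + (INR (S n) - 1) ^ 2 * ln r)
             * sum_f_R0 (fun k => energy (a k) (a (S k))) n).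
  set (G := sum_f_R0 (fun k => energy (a k) (a (S k))) n).
  assert (HG : 0 <= G) by (apply cond_pos_sum; intro; apply energy_nonneg; apply Ha).
  rewrite S_INR; replace (INR n + 1 - 1) with (INR n) by ring.
  destruct n as [| m].
  - (* T = 1: the sum is the single step itself *)
    replace (16 * (1 + INR 0 ^ 2 * ln r)) with 16 by (simpl; ring).
    change G with (energy (a O) (a 1%nat)) in HG |- *; lra.
  -
    apply Rle_trans with (INR (S (S m)) * (4 + 2 * (INR (S (S m)) * ln r)) * G).
    + apply (path_energy_bound a (ln r)); [exact Ha |].
      intros k Hk; specialize (Hratio (S k) ltac:(lia)).
      replace (S k - 1)%nat with k in Hratio by lia.
      apply log_step_le; auto.
    + rewrite S_INR; apply Rmult_le_compat_r; [exact HG |].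
      apply path_constant_le; [apply (le_INR 1); lia | exact HL].
Qed.
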